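(* Let $M:\alpha\mapsto M_\alpha$ be a matroid flock on a finite set $E$, let $\alpha\in\mathbb{Z}^E$, and let $J\subseteq E$. If $M_\alpha=M_{\alpha+e_J}$, then $\lambda_{M_\alpha}(J)=0$.
   Context: $e_J:=\sum_{i\in J}e_i$ ($e_i$ unit vectors), $\mathbf{1}:=e_E$. A matroid flock of rank $d$ on $E$ is a map $M$ assigning to each $\alpha\in\mathbb{Z}^E$ a matroid $M_\alpha$ on $E$ of rank $d$ with (MF1) $M_\alpha/i=M_{\alpha+e_i}\setminus i$ for all $\alpha$, $i$ (contraction, deletion); and (MF2) $M_\alpha=M_{\alpha+\mathbf{1}}$. For a matroid $N$ on $E$ with rank function $r_N$, the connectivity function is $\lambda_N(J):=r_N(J)+r_N(E\setminus J)-r_N(E)$. *)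

From mathcomp Require Import all_boot all_order all_algebra.
Set Implicit Arguments. Unset Strict Implicit. Unset Printing Implicit Defensive.
Import GRing.Theory Num.Theory.

Record matroid (E : finType) := Matroid {
  mrank :> {set E} -> nat;
  mrank_card : forall X, mrank X <= #|X|;
  mrank_mono : forall X Y : {set E}, X \subset Y -> mrank X <= mrank Y;
  mrank_submod : forall X Y : {set E},
    mrank (X :|: Y) + mrank (X :&: Y) <= mrank X + mrank Y
}.

Definition mat_rank (E : finType) (M : matroid E) : nat := M [set: E].

(* Contraction and deletion of an element i, as rank functions on subsets of
   E \ {i} (the ground set of M/i and M\i). *)
Definition contr_rank (E : finType) (M : matroid E) (i : E) (X : {set E}) : nat :=
  M (X :|: [set i]) - M [set i].
Definition del_rank (E : finType) (M : matroid E) (i : E) (X : {set E}) : nat :=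
  M X.

Definition contr_eq_del (E : finType) (M N : matroid E) (i : E) : Prop :=
  forall X : {set E}, X \subset [set~ i] -> contr_rank M i X = del_rank N i X.

Definition mat_eq (E : finType) (M N : matroid E) : Prop :=
  forall X : {set E}, M X = N X.

Definition evec (E : finType) (J : {set E}) : {ffun E -> int} :=
  [ffun k => Posz (k \in J)].
Definition vadd (E : finType) (a b : {ffun E -> int}) : {ffun E -> int} :=
  [ffun k => (a k + b k)%R].

Definition matroid_flock (E : finType) (d : nat)
    (M : {ffun E -> int} -> matroid E) : Prop :=
  [/\ forall a, mat_rank (M a) = d,
      forall a (i : E), contr_eq_del (M a) (M (vadd a (evec [set i]))) i
    & forall a, mat_eq (M a) (M (vadd a (evec [set: E])))].

(* Connectivity function lambda_N(J) = r(J) + r(E\J) - r(E) (an integer, in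
   fact nonnegative by submodularity). *)
Definition connectivity (E : finType) (N : matroid E) (J : {set E}) : int :=
  (Posz (N J) + Posz (N (~: J)) - Posz (N [set: E]))%R.

(* Peeling off one element j of S at a time, axiom (MF1) says that the rank
   function of M_{alpha + e_S} on sets avoiding S is the rank function of the
   contraction M_alpha / S, i.e. r_{alpha+e_S}(X) = r_alpha(X u S) - r_alpha(S).
   For S = J and X = E \ J, the hypothesis M_{alpha+e_J} = M_alpha turns this
   into r(E \ J) + r(J) = r(E). *)

From mathcomp Require Import all_boot all_order all_algebra.
Import GRing.Theory Num.Theory.

Set Implicit Arguments.
Unset Strict Implicit.
Unset Printing Implicit Defensive.

Lemma finset_ind (T : finType) (P : {set T} -> Prop) :
  P set0 -> (forall (x : T) (S : {set T}), x \notin S -> P S -> P (x |: S)) ->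
  forall S, P S.
Proof.
move=> P0 PU S; elim: {S}#|S| {-2}S (erefl #|S|) => [|n IH] S cardS.
  by move/eqP: cardS; rewrite cards_eq0 => /eqP ->.
have [x xS] : {x | x \in S} by apply/sigW/set0Pn; rewrite -card_gt0 cardS.
rewrite -(setD1K xS); apply: PU; first by rewrite !inE eqxx.
by apply: IH; move: cardS; rewrite (cardsD1 x) xS => -[].
Qed.

Lemma vadd_evec0 (E : finType) (a : {ffun E -> int}) : vadd a (evec set0) = a.
Proof. by apply/ffunP => k; rewrite !ffunE inE addr0. Qed.

Lemma vadd_evecU1 (E : finType) (a : {ffun E -> int}) (j : E) (S : {set E}) :
  j \notin S -> vadd a (evec (j |: S)) = vadd (vadd a (evec S)) (evec [set j]).
Proof.
move=> jS; apply/ffunP => k; rewrite !ffunE !inE -addrA; congr (_ + _)%R.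
by case: eqVneq => [->|_]; rewrite ?(negbTE jS) ?addr0.
Qed.

Section FlockContraction.

Variables (E : finType) (M : {ffun E -> int} -> matroid E).

Hypothesis contr_del :
  forall a (i : E), contr_eq_del (M a) (M (vadd a (evec [set i]))) i.

Lemma flock_rank_shift1 a (j : E) (X : {set E}) :
  j \notin X -> M (vadd a (evec [set j])) X + M a [set j] = M a (j |: X).
Proof.
move=> jX; have Xj : X \subset [set~ j].
  by apply/subsetP => x xX; rewrite !inE; apply: contraNneq jX => <-.
rewrite -[M _ X](@contr_del a j X Xj) /contr_rank setUC subnK //.
by apply: mrank_mono; rewrite subsetUl.
Qed.

Lemma flock_rank_shift a (S X : {set E}) :
  [disjoint X & S] -> M (vadd a (evec S)) X + M a S = M a (X :|: S).
Proof.
elim/finset_ind: S X a => [|j S jS IH] X a dXS.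
  have := mrank_card (M a) set0; rewrite cards0 leqn0 => /eqP ->.
  by rewrite vadd_evec0 setU0 addn0.
have jX : j \notin X by rewrite (disjointFl dXS) ?setU11.
have dXS' : [disjoint X & S] by apply: disjointWr dXS; apply: subsetUr.
have dXjS : [disjoint j |: X & S].
  by rewrite disjoints_subset subUset sub1set inE jS -disjoints_subset dXS'.
rewrite vadd_evecU1 // setUCA setUA -(IH _ _ dXjS) -(flock_rank_shift1 _ jX).
by rewrite -(IH [set j]) ?disjoints1 // addnA.
Qed.

End FlockContraction.

Theorem mainTheorem17 (E : finType) (d : nat)
    (M : {ffun E -> int} -> matroid E) (alpha : {ffun E -> int}) (J : {set E}) :
  matroid_flock d M ->
  mat_eq (M alpha) (M (vadd alpha (evec J))) ->
  connectivity (M alpha) J = 0%R.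
Proof.
case=> _ contr_del _ shiftJ_eq.
have dCJ : [disjoint ~: J & J] by rewrite disjoints_subset.
have := flock_rank_shift contr_del alpha dCJ.
rewrite -shiftJ_eq setUC setUCr => rank_split.
by rewrite /connectivity -rank_split addnC PoszD subrr.
Qed.
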